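(* Let $l$ be coprime to the conductor $N$. If $G_l$ is a diagonal matrix, then $G_l=\pm\mathbb{I}$.
   Context: Standing setting. $\mathcal{C}$ is a rational conformal field theory (RCFT) with finite set $\mathcal{I}$ of primary fields, vacuum $0\in\mathcal{I}$, central charge $c$ and conformal weights $\Delta_p$. Its genus-one characters afford a unitary representation $\rho$ of $\Gamma(1)=SL(2,\mathbb{Z})$; for $m\in\Gamma(1)$ write $M=\rho(m)$. $S=\rho\begin{pmatrix}0&-1\\1&0\end{pmatrix}$, $T=\rho\begin{pmatrix}1&1\\0&1\end{pmatrix}$. Known properties: $T$ is diagonal of finite order with $T_{pp}=\omega_p=\exp(2\pi i(\Delta_p-c/24))$; $S$ is symmetric; $S^2$ is the charge-conjugation permutation matrix; $S_{0p}>0$ for all $p$; Verlinde numbers are non-negative integers. $F$ is the field generated over $\mathbb{Q}$ by all entries of all $M$; the conductor $N$ is the smallest positive integer with $F\subseteq\mathbb{Q}(\zeta_N)$ and the order of $T$ dividing $N$. For $l$ coprime to $N$, $\sigma_l$ is the automorphism of $\mathbb{Q}(\zeta_N)$ with $\zeta_N\mapsto\zeta_N^l$, applied entrywise to matrices. Galois symmetry: for $l$ coprime to $N$, $\sigma_l(S)=SG_l=G_l^{-1}S$ where $(G_l)_{pq}=\varepsilon_l(q)\delta_{p,\pi_l q}$ for a permutation $\pi_l$ of $\mathcal{I}$ and signs $\varepsilon_l(q)\in\{\pm1\}$; $G_{lm}=G_lG_m$; $\sigma_l(T)=T^l$. *)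

(* Primaries are indexed by 'I_n.+1, the vacuum is ord0.
   Matrix entries live in algC (algebraic complex numbers). *)
From HB Require Import structures.
From mathcomp Require Import all_boot all_order all_algebra all_fingroup all_field.
Set Implicit Arguments.
Unset Strict Implicit.
Unset Printing Implicit Defensive.
Import Order.TTheory GRing.Theory Num.Theory.
Local Open Scope ring_scope.

Definition SL2Z (m : 'M[int]_2) : Prop := \det m = 1.

(* generators S = (0 -1; 1 0) and T = (1 1; 0 1) *)
Definition Sgen : 'M[int]_2 :=
  \matrix_(i < 2, j < 2) (if i == j then 0 else if val i == 0%N then -1 else 1).
Definition Tgen : 'M[int]_2 :=
  \matrix_(i < 2, j < 2) (if (val i == 1%N) && (val j == 0%N) then 0 else 1).

(* rho is a unitary representation of SL(2,Z) (values off SL(2,Z) irrelevant) *)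
Definition unitary_rep n (rho : 'M[int]_2 -> 'M[algC]_n.+1) : Prop :=
  [/\ rho 1%:M = 1%:M,
      (forall a b, SL2Z a -> SL2Z b -> rho (a *m b) = rho a *m rho b)
    & (forall a, SL2Z a -> rho a *m (map_mx Num.conj (rho a))^T = 1%:M)].

Definition Smx n (rho : 'M[int]_2 -> 'M[algC]_n.+1) := rho Sgen.
Definition Tmx n (rho : 'M[int]_2 -> 'M[algC]_n.+1) := rho Tgen.

Definition verlinde n (S : 'M[algC]_n.+1) (p q r : 'I_n.+1) : algC :=
  \sum_(s < n.+1) S p s * S q s * Num.conj (S r s) / S ord0 s.

Definition rcft_modular_data n (rho : 'M[int]_2 -> 'M[algC]_n.+1) : Prop :=
  let S := Smx rho in let T := Tmx rho in
  [/\ unitary_rep rho,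
      is_diag_mx T /\ (exists k, (0 < k)%N /\ T ^+ k = 1%:M),
      S^T = S /\
      (exists C : 'S_n.+1, (C * C)%g = 1%g /\ S *m S = perm_mx C),
      (forall p, 0 < S ord0 p)
    & (forall p q r, verlinde S p q r \is a Num.nat)].

Definition in_cyclo (N : nat) (x : algC) : Prop :=
  exists (z : algC) (p : {poly rat}), N.-primitive_root z /\ x = (map_poly ratr p).[z].

Definition conductor_prop n (rho : 'M[int]_2 -> 'M[algC]_n.+1) (N : nat) : Prop :=
  [/\ (0 < N)%N,
      (forall m, SL2Z m -> forall i j, in_cyclo N (rho m i j))
    & Tmx rho ^+ N = 1%:M].

Definition is_conductor n (rho : 'M[int]_2 -> 'M[algC]_n.+1) (N : nat) : Prop :=
  conductor_prop rho N /\ (forall M, (M < N)%N -> ~ conductor_prop rho M).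

(* (G_l)_{pq} = eps_l(q) delta_{p, pi_l q}; eps given as a boolean (true = -1) *)
Definition Gmx n (pi : 'S_n.+1) (eps : 'I_n.+1 -> bool) : 'M[algC]_n.+1 :=
  \matrix_(p, q) (if p == pi q then (-1) ^+ eps q else 0).

(* sigma_l is represented by any automorphism u of algC extending
   zeta_N |-> zeta_N^l (entries lie in Q(zeta_N), so the choice is irrelevant) *)
Definition extends_sigma (N l : nat) (u : {rmorphism algC -> algC}) : Prop :=
  forall z : algC, N.-primitive_root z -> u z = z ^+ l.

Definition galois_symmetry n (rho : 'M[int]_2 -> 'M[algC]_n.+1) (N : nat)
  (pi : nat -> 'S_n.+1) (eps : nat -> 'I_n.+1 -> bool) : Prop :=
  forall l, coprime l N ->
    (forall u : {rmorphism algC -> algC}, extends_sigma N l u ->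
       [/\ map_mx u (Smx rho) = Smx rho *m Gmx (pi l) (eps l),
           map_mx u (Smx rho) = invmx (Gmx (pi l) (eps l)) *m Smx rho
         & map_mx u (Tmx rho) = Tmx rho ^+ l])
    /\ (forall m, coprime m N ->
          Gmx (pi (l * m)%N) (eps (l * m)%N) = Gmx (pi l) (eps l) *m Gmx (pi m) (eps m)).

From HB Require Import structures.
From mathcomp Require Import all_boot all_order all_algebra all_fingroup all_field.
Import GRing.Theory Num.Theory.
Set Implicit Arguments.
Unset Strict Implicit.
Unset Printing Implicit Defensive.
Local Open Scope ring_scope.

(* A diagonal signed permutation matrix G is a diagonal sign matrix, hence an
   involution, so Galois symmetry sigma_l(S) = S G = G^-1 S makes G commute
   with S. Comparing the vacuum rows of S G and G S gives S_0q e(q) = e(0) S_0q,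
   and S_0q > 0 forces every sign e(q) to equal e(0). *)

Lemma sign_diag_mx_sqr (R : pzRingType) n (b : 'I_n -> bool) :
  diag_mx (\row_q ((-1) ^+ b q : R)) *m diag_mx (\row_q (-1) ^+ b q) = 1%:M.
Proof.
rewrite mulmx_diag -diag_const_mx; congr diag_mx.
by apply/rowP => q; rewrite !mxE -signr_addb addbb.
Qed.

Lemma invmx_involutive (R : comUnitRingType) n (A : 'M[R]_n) :
  A *m A = 1%:M -> invmx A = A.
Proof.
move=> AA; have [Au _] := mulmx1_unit AA.
by rewrite -[RHS]mul1mx -(mulVmx Au) -mulmxA AA mulmx1.
Qed.

Lemma diag_mx_comm_eq (R : idomainType) n (A : 'M[R]_n) (d : 'rV_n) i j :
  A *m diag_mx d = diag_mx d *m A -> A i j != 0 -> d 0 i = d 0 j.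
Proof.
move=> /matrixP/(_ i j); rewrite mul_mx_diag mul_diag_mx !mxE mulrC => Aij Aij0.
exact: (mulIf Aij0).
Qed.

Lemma diag_mx_comm_scalar (R : idomainType) n (A : 'M[R]_n) (d : 'rV_n) i :
  (forall j, A i j != 0) -> A *m diag_mx d = diag_mx d *m A ->
  diag_mx d = (d 0 i)%:M.
Proof.
move=> Ai_nz AdA; rewrite -diag_const_mx; congr diag_mx.
by apply/rowP => j; rewrite mxE (diag_mx_comm_eq AdA (Ai_nz j)).
Qed.

Lemma Gmx_diagE n (pi : 'S_n.+1) (eps : 'I_n.+1 -> bool) :
  is_diag_mx (Gmx pi eps) -> Gmx pi eps = diag_mx (\row_q (-1) ^+ eps q).
Proof.
move=> /is_diag_mxP Gdiag.
have pi_id q : pi q = q.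
  apply/eqP/negPn/negP => /Gdiag.
  by rewrite mxE eqxx => /eqP; rewrite signr_eq0.
by apply/matrixP => p q; rewrite !mxE pi_id; case: eqP => [->|]; rewrite ?mulr1n.
Qed.

Lemma galois_symmetry_S_Gmx n (rho : 'M[int]_2 -> 'M[algC]_n.+1) N pi eps l :
  galois_symmetry rho N pi eps -> coprime l N ->
  Smx rho *m Gmx (pi l) (eps l) = invmx (Gmx (pi l) (eps l)) *m Smx rho.
Proof.
move=> gal coprime_lN; have [u u_root] := Qn_aut_exists coprime_lN.
have u_sigma : extends_sigma N l u.
  by move=> z z_prim; apply/u_root/prim_expr_order.
by have [<- <- _] := (gal l coprime_lN).1 u u_sigma.
Qed.

Theorem mainTheorem10 (n : nat) (rho : 'M[int]_2 -> 'M[algC]_n.+1) (N : nat)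
  (pi : nat -> 'S_n.+1) (eps : nat -> 'I_n.+1 -> bool) :
  rcft_modular_data rho -> is_conductor rho N -> galois_symmetry rho N pi eps ->
  forall l : nat, coprime l N ->
    is_diag_mx (Gmx (pi l) (eps l)) ->
    Gmx (pi l) (eps l) = 1%:M \/ Gmx (pi l) (eps l) = - 1%:M.
Proof.
move=> [_ _ _ S0_pos _] _ gal l coprime_lN /Gmx_diagE GE.
have SG := galois_symmetry_S_Gmx gal coprime_lN.
rewrite GE invmx_involutive ?sign_diag_mx_sqr // in SG.
have S0_nz q : Smx rho ord0 q != 0 := lt0r_neq0 (S0_pos q).
rewrite GE (diag_mx_comm_scalar S0_nz SG) mxE.
by case: (eps l ord0); [right; rewrite expr1 raddfN | left].
Qed.
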